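(* Let $\hat{x}$ be the final value of the vector $x$ in Algorithm 1 and let $OPT$ be a set maximizing $f$ among subsets of $N$ of size at most $k$. If $\|\hat{x}\|_1<k$, then $F(\hat{x}+\mathbf{1}_{OPT\setminus\mathrm{supp}(\hat{x})})\le F(\hat{x})+c\tau$.
   Context: Setting: finite ground set $N$ whose elements arrive one at a time in a stream, non-negative submodular $f\colon 2^N\to\mathbb{R}_{\ge 0}$, positive integer $k$. $\mathbf{1}_A$ is the characteristic vector of $A$. $F$ is the multilinear extension of $f$: $F(x)=\sum_{A\subseteq N} f(A)\prod_{u\in A}x_u\prod_{u\notin A}(1-x_u)$ for $x\in[0,1]^N$, and $\partial_uF(x)=F(x\vee \mathbf{1}_u)-F(x\wedge\mathbf{1}_{N\setminus\{u\}})$ (coordinatewise max/min). $\mathrm{supp}(x)=\{u: x_u>0\}$. Algorithm 1 has parameters $p\in(0,1)$, $c>0$, $\alpha\in(0,1]$ and a number $\tau$. It starts with $x=\mathbf{0}$, and when an element $u$ arrives, if $\partial_uF(x)\ge c\tau/k$ it sets $x\leftarrow x+\min\{p,\,k-\|x\|_1\}\cdot\mathbf{1}_u$ (otherwise $x$ is unchanged). After the stream ends, it computes a random set $S_1$ with $|S_1|\le k$ and $\mathbb{E}[f(S_1)]\ge F(x)$, and a random set $S_2\subseteq\mathrm{supp}(x)$ with $|S_2|\le k$ and $\mathbb{E}[f(S_2)]\ge\alpha\cdot\max_{S\subseteq\mathrm{supp}(x),|S|\le k}f(S)$, and outputs the better of $S_1,S_2$. *)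

From mathcomp Require Import all_boot all_order all_algebra.
Set Implicit Arguments. Unset Strict Implicit. Unset Printing Implicit Defensive.
Import Order.TTheory GRing.Theory Num.Theory.
Local Open Scope ring_scope.

Section Defs.
Variables (R : realFieldType) (T : finType).

Definition chi (A : {set T}) : T -> R := fun v => if v \in A then 1 else 0.

Definition multilinear (f : {set T} -> R) (x : T -> R) : R :=
  \sum_(A : {set T}) f A * (\prod_(u in A) x u) * (\prod_(u in ~: A) (1 - x u)).

Definition vmax (x y : T -> R) : T -> R := fun v => Num.max (x v) (y v).
Definition vmin (x y : T -> R) : T -> R := fun v => Num.min (x v) (y v).

Definition partialF (f : {set T} -> R) (u : T) (x : T -> R) : R :=
  multilinear f (vmax x (chi [set u])) - multilinear f (vmin x (chi (~: [set u]))).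

Definition norm1 (x : T -> R) : R := \sum_(v : T) `|x v|.

Definition supp (x : T -> R) : {set T} := [set u | 0 < x u].

Definition submodular (f : {set T} -> R) : Prop :=
  forall A B : {set T}, f (A :|: B) + f (A :&: B) <= f A + f B.

Definition alg_step (f : {set T} -> R) (p c tau : R) (k : nat)
  (x : T -> R) (u : T) : T -> R :=
  if c * tau / k%:R <= partialF f u x then
    (fun v => x v + Num.min p (k%:R - norm1 x) * chi [set u] v)
  else x.

Definition alg_x (f : {set T} -> R) (p c tau : R) (k : nat) (s : seq T) : T -> R :=
  foldl (alg_step f p c tau k) (fun _ => 0) s.

End Defs.

(* On the unit cube, the paper's partial derivative of F is the difference
   [dmultilinear f u x] of F with x_u set to 1 and to 0.  As F is affine in each
   coordinate, submodularity of f makes every mixed second difference of F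
   nonpositive, so each partial derivative is antitone on the cube.  Hence
   raising the coordinates of a set S on which x vanishes from 0 to 1, one at
   a time, gives F(x + 1_S) <= F(x) + sum_(u in S) d_u F(x).  For the final x,
   every u in OPT \ supp x was rejected on arrival (an accepted u would have
   received min(p, k - |x|_1) > 0), so d_u F < c tau / k at that time, and by
   antitonicity also at the final x; there are at most k such u. *)

From mathcomp Require Import all_boot all_order all_algebra.
From mathcomp Require Import ring lra.
Import Order.TTheory GRing.Theory Num.Theory.
Set Implicit Arguments.
Local Open Scope ring_scope.

Section Multilinear.
Context {R : realFieldType} {T : finType}.
Implicit Types (f g h : {set T} -> R) (x y : T -> R) (u v : T) (A : {set T}).

Definition upd x u (t : R) : T -> R := fun v => if v == u then t else x v.

Lemma upd_id x u : upd x u (x u) =1 x.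
Proof. by move=> v; rewrite /upd; case: eqP => [->|]. Qed.

Lemma upd_upd x u a b : upd (upd x u a) u b =1 upd x u b.
Proof. by move=> v; rewrite /upd; case: eqP. Qed.

Lemma upd_comm x u v a b : u != v -> upd (upd x u a) v b =1 upd (upd x v b) u a.
Proof.
move=> uv w; rewrite /upd; case: (eqVneq w v) => [->|//].
by rewrite eq_sym (negbTE uv).
Qed.

Definition in_unit_cube x : Prop := forall v, 0 <= x v <= 1.

Lemma in_unit_cube_upd x u t :
  in_unit_cube x -> 0 <= t <= 1 -> in_unit_cube (upd x u t).
Proof. by move=> x01 t01 v; rewrite /upd; case: eqP. Qed.

Definition ml_weight x A : R := \prod_z (if z \in A then x z else 1 - x z).

Lemma multilinearE f x : multilinear f x = \sum_A f A * ml_weight x A.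
Proof.
apply: eq_bigr => A _; rewrite -mulrA /ml_weight [in RHS](bigID (mem A)) /=.
congr (_ * (_ * _)); first by apply: eq_big => // z ->.
by apply: eq_big => z; rewrite inE // => /negbTE ->.
Qed.

Lemma eq_multilinear f x y : x =1 y -> multilinear f x = multilinear f y.
Proof.
move=> xy; apply: eq_bigr => A _.
by congr (_ * _ * _); apply: eq_bigr => z _; rewrite xy.
Qed.

Lemma multilinearB g h x :
  multilinear (fun A => g A - h A) x = multilinear g x - multilinear h x.
Proof. by rewrite -sumrB; apply: eq_bigr => A _; rewrite !mulrBl. Qed.

Lemma multilinear_le0 g x :
  (forall A, g A <= 0) -> in_unit_cube x -> multilinear g x <= 0.
Proof.
move=> g_le0 x01; apply: sumr_le0 => A _.
rewrite -mulrA mulr_le0_ge0 // mulr_ge0 //; apply: prodr_ge0 => z _;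
  have /andP [x0 x1] := x01 z; by rewrite ?subr_ge0.
Qed.

Lemma ml_weight_upd x u t A :
  ml_weight (upd x u t) A =
  (if u \in A then t else 1 - t)
  * \prod_(z | z != u) (if z \in A then x z else 1 - x z).
Proof.
rewrite /ml_weight (bigD1 u) //= /upd eqxx; congr (_ * _).
by apply: eq_bigr => z /negbTE ->.
Qed.

Lemma multilinear_affine f x u :
  multilinear f x =
  x u * multilinear f (upd x u 1) + (1 - x u) * multilinear f (upd x u 0).
Proof.
rewrite -(eq_multilinear f (upd_id x u)) !multilinearE !mulr_sumr -big_split /=.
apply: eq_bigr => A _; rewrite !ml_weight_upd.
by case: (u \in A); ring.
Qed.

Lemma sum_mem_setU1 u (F : {set T} -> R) :
  \sum_(A : {set T} | u \in A) F A = \sum_(A : {set T} | u \notin A) F (u |: A).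
Proof.
rewrite (reindex_onto (fun A => u |: A) (fun A => A :\ u)) => [|A];
  last exact: setD1K.
apply: eq_bigl => A; rewrite setU11 /=.
apply/eqP/idP => [<-|]; last exact: setU1K.
by rewrite !inE eqxx.
Qed.

Lemma multilinear_upd1 f x u :
  multilinear f (upd x u 1) = multilinear (fun A => f (u |: A)) (upd x u 0).
Proof.
rewrite !multilinearE (bigID (fun A => u \in A)) [RHS](bigID (fun A => u \in A)) /=.
rewrite sum_mem_setU1 [X in _ + X]big1 => [|A /negbTE uA]; last first.
  by rewrite ml_weight_upd uA subrr mul0r mulr0.
rewrite [X in _ = X + _]big1 => [|A uA];
  last by rewrite ml_weight_upd uA !mul0r mulr0.
rewrite add0r addr0; apply: eq_bigr => A /negbTE uA.
rewrite !ml_weight_upd setU11 uA subr0 !mul1r; congr (_ * _).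
by apply: eq_bigr => z /negbTE zu; rewrite in_setU1 zu.
Qed.

Definition dmultilinear f u x : R :=
  multilinear f (upd x u 1) - multilinear f (upd x u 0).

Lemma eq_dmultilinear f u x y :
  x =1 y -> dmultilinear f u x = dmultilinear f u y.
Proof.
move=> xy; rewrite /dmultilinear.
by congr (_ - _); apply: eq_multilinear => v; rewrite /upd xy.
Qed.

Lemma dmultilinear_upd f u x t : dmultilinear f u (upd x u t) = dmultilinear f u x.
Proof. by rewrite /dmultilinear !(eq_multilinear f (upd_upd _ _ _ _)). Qed.

Lemma dmultilinear_affine f u v x : u != v ->
  dmultilinear f u x = dmultilinear f u (upd x v 0)
    + x v * (dmultilinear f u (upd x v 1) - dmultilinear f u (upd x v 0)).
Proof.
move=> uv; rewrite /dmultilinear (multilinear_affine f (upd x u 1) v).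
rewrite (multilinear_affine f (upd x u 0) v) /upd eq_sym (negbTE uv) -!/(upd _ _ _).
rewrite !(eq_multilinear f (upd_comm _ _ _ _ _ uv)); ring.
Qed.

Lemma partialF_dmultilinear f u x :
  in_unit_cube x -> partialF f u x = dmultilinear f u x.
Proof.
move=> x01; congr (_ - _); apply: eq_multilinear => v;
rewrite /vmax /vmin /upd /chi !inE; have /andP [x0 x1] := x01 v.
  by case: eqP => _; [rewrite max_r | rewrite max_l].
by case: eqP => _; [rewrite min_r | rewrite min_l].
Qed.

End Multilinear.

Section Submodular.
Variables (R : realFieldType) (T : finType) (f : {set T} -> R).
Hypothesis f_submod : submodular f.
Implicit Types (x y : T -> R) (u v : T) (A : {set T}).

Lemma submodular_second_diff_le0 u v A : u != v ->
  f (u |: (v |: A)) - f (v |: A) - (f (u |: A) - f A) <= 0.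
Proof.
move=> uv; have := f_submod (u |: A) (v |: A).
have -> : (u |: A) :|: (v |: A) = u |: (v |: A) by rewrite setUACA setUid setUA.
have -> : (u |: A) :&: (v |: A) = A.
  by rewrite -setUIl disjoint_setI0 ?set0U // disjoints1 in_set1.
lra.
Qed.

Lemma dmultilinear_cross_le0 x u v : u != v -> in_unit_cube x ->
  dmultilinear f u (upd x v 1) - dmultilinear f u (upd x v 0) <= 0.
Proof.
move=> uv x01.
(* With u and v both set to 0, the mixed difference is the multilinear
   extension of the second difference of f. *)
have swap g a b :
    multilinear g (upd (upd x v b) u a) = multilinear g (upd (upd x u a) v b).
  exact/esym/eq_multilinear/upd_comm.
rewrite /dmultilinear !multilinear_upd1 !swap !multilinear_upd1 -!multilinearB.
apply: multilinear_le0 => [A|]; first exact: submodular_second_diff_le0.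
have zero01 : 0 <= (0 : R) <= 1 by rewrite lexx ler01.
by do 2!apply: in_unit_cube_upd => //.
Qed.

Lemma dmultilinear_upd_le x u v t : in_unit_cube x -> x v <= t ->
  dmultilinear f u (upd x v t) <= dmultilinear f u x.
Proof.
move=> x01 xt; have [<-|uv] := eqVneq u v; first by rewrite dmultilinear_upd.
have cross := @dmultilinear_cross_le0 x u v uv x01.
rewrite [leRHS](dmultilinear_affine _ _ _ _ uv) (dmultilinear_affine _ _ _ _ uv).
rewrite !(eq_dmultilinear _ _ (upd_upd _ _ _ _)) {2}/upd eqxx.
nra.
Qed.

Lemma dmultilinear_antitone x y u :
  (forall v, 0 <= x v) -> (forall v, x v <= y v) -> (forall v, y v <= 1) ->
  dmultilinear f u y <= dmultilinear f u x.
Proof.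
move=> x0 xy y1.
suff key (s : seq T) z : (forall v, x v <= z v <= y v) ->
    (forall v, v \notin s -> z v = y v) -> dmultilinear f u y <= dmultilinear f u z.
  by apply: (key (enum T) x) => v; rewrite ?mem_enum // lexx xy.
elim: s z => [|a s IH] z zxy zy.
  by rewrite (eq_dmultilinear _ _ (fun v => zy v isT)).
have z01 : in_unit_cube z.
  move=> v; have /andP [xz zy'] := zxy v.
  by rewrite (le_trans (x0 v) xz) (le_trans zy' (y1 v)).
apply: (le_trans (IH (upd z a (y a)) _ _)).
- by move=> v; rewrite /upd; case: eqP => [->|_]; rewrite ?xy ?lexx ?zxy.
- move=> v vs; rewrite /upd; case: eqP => [->|/eqP va] //.
  by rewrite zy // in_cons negb_or va.
- by apply: dmultilinear_upd_le => //; have /andP [] := zxy a.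
Qed.

Lemma multilinear_add_seq_le x (s : seq T) :
  uniq s -> in_unit_cube x -> {in s, forall v, x v = 0} ->
  multilinear f (fun v => x v + (v \in s)%:R)
    <= multilinear f x + \sum_(u <- s) dmultilinear f u x.
Proof.
elim: s => [|a s IH] /= => [_ _ _ | /andP [as_ us] x01 xs].
  by rewrite big_nil addr0 (eq_multilinear f (y := x)) // => v; rewrite addr0.
have xs' : {in s, forall v, x v = 0} by move=> v vs; rewrite xs // in_cons vs orbT.
set z := fun v => x v + (v \in s)%:R.
have za : z a = 0 by rewrite /z (negbTE as_) xs ?mem_head // addr0.
have -> : multilinear f (fun v => x v + (v \in a :: s)%:R)
    = multilinear f z + dmultilinear f a z.
  rewrite /dmultilinear -(eq_multilinear f (upd_id z a)) za addrC subrK.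
  apply: eq_multilinear => v; rewrite /upd in_cons.
  by case: eqP => [->|_] //=; rewrite xs ?mem_head // add0r.
have za_le : dmultilinear f a z <= dmultilinear f a x.
  apply: dmultilinear_antitone => v; have /andP [x0 x1] := x01 v.
  - exact: x0.
  - by rewrite /z lerDl ler0n.
  - rewrite /z; case: (boolP (v \in s)) => vs; last by rewrite addr0.
    by rewrite xs' // add0r.
have := IH us x01 xs'.
rewrite big_cons -/z; lra.
Qed.

Lemma multilinear_add_chi_le x (S : {set T}) :
  in_unit_cube x -> {in S, forall v, x v = 0} ->
  multilinear f (fun v => x v + chi R S v)
    <= multilinear f x + \sum_(u in S) dmultilinear f u x.
Proof.
move=> x01 xS; rewrite -big_enum /=.
rewrite (@eq_multilinear _ _ _ _ (fun v => x v + (v \in enum S)%:R)).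
  apply: multilinear_add_seq_le => // [|v]; first exact: enum_uniq.
  by rewrite mem_enum; apply: xS.
by move=> v; rewrite mem_enum /chi; case: (v \in S).
Qed.

End Submodular.

Section Algorithm.
Variables (R : realFieldType) (T : finType) (f : {set T} -> R).
Variables (p c tau : R) (k : nat).
Hypotheses (f_submod : submodular f) (p_gt0 : 0 < p) (p_le1 : p <= 1).
Local Notation step := (alg_step f p c tau k).

(* [l] is the part of the stream not yet read. *)
Definition alg_invariant (l : seq T) (x : T -> R) : Prop :=
  [/\ forall v, 0 <= x v <= p, {in l, forall v, x v = 0} & norm1 x <= k%:R].

Lemma alg_invariant0 l : alg_invariant l (fun _ : T => 0).
Proof.
split=> [v|//|]; first by rewrite lexx ltW.
by rewrite /norm1 big1 ?ler0n // => v _; rewrite normr0.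
Qed.

Lemma norm1_add_chi1 (x : T -> R) (a : T) (d : R) :
  (forall v, 0 <= x v) -> 0 <= d ->
  norm1 (fun v => x v + d * chi R [set a] v) = norm1 x + d.
Proof.
move=> x0 d0; rewrite /norm1 (bigD1 a) //= [in RHS](bigD1 a) //=.
rewrite /chi in_set1 eqxx mulr1.
rewrite !ger0_norm ?addr_ge0 // -addrA [d + _]addrC addrA; congr (_ + _ + _).
by apply: eq_bigr => v /negbTE va; rewrite in_set1 va mulr0 addr0.
Qed.

Lemma alg_step_spec (a : T) (l : seq T) (x : T -> R) :
  a \notin l -> alg_invariant (a :: l) x ->
  [/\ alg_invariant l (step x a), forall v, x v <= step x a v
    & norm1 x <= norm1 (step x a)].
Proof.
move=> al [x_range x_zero x_norm]; rewrite /alg_step; case: ifP => _; last first.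
  by split=> //; split=> // v vl; rewrite x_zero // in_cons vl orbT.
set d := Num.min p _.
have d_ge0 : 0 <= d by rewrite le_min ltW // subr_ge0.
have x0 v : 0 <= x v by have /andP [] := x_range v.
have xa : x a = 0 by rewrite x_zero ?mem_head.
rewrite norm1_add_chi1 // lerDl d_ge0; split=> //; last first.
  by move=> v; rewrite lerDl mulr_ge0 // /chi; case: ifP.
split=> [v|v vl|].
- rewrite /chi in_set1; case: eqP => [->|_]; last by rewrite mulr0 addr0.
  by rewrite xa add0r mulr1 d_ge0 ge_min lexx.
- rewrite /chi in_set1; case: eqP => [va|_]; first by move: al; rewrite -va vl.
  by rewrite x_zero ?mulr0 ?addr0 // in_cons vl orbT.
- rewrite norm1_add_chi1 //; have : d <= k%:R - norm1 x by rewrite ge_min lexx orbT.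
  lra.
Qed.

Lemma alg_fold_spec {l1 l2 : seq T} {x : T -> R} :
  uniq (l1 ++ l2) -> alg_invariant (l1 ++ l2) x ->
  [/\ alg_invariant l2 (foldl step x l1), forall v, x v <= foldl step x l1 v
    & norm1 x <= norm1 (foldl step x l1)].
Proof.
elim: l1 x => [|a l1 IH] x /=; first by split.
move=> /andP [al12 ul12] /(alg_step_spec al12) [inv1 le1 n1].
have [inv2 le2 n2] := IH _ ul12 inv1.
by split=> // [v|]; [exact: le_trans (le1 v) (le2 v) | exact: le_trans n1 n2].
Qed.

Lemma alg_x_range (s : seq T) v : uniq s -> 0 <= alg_x f p c tau k s v <= p.
Proof.
move=> us; have us' : uniq (s ++ [::]) by rewrite cats0.
by have [[x_range _ _] _ _] := alg_fold_spec us' (alg_invariant0 _); apply: x_range.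
Qed.

Lemma alg_step_rejected (a : T) (l : seq T) (x : T -> R) :
  alg_invariant (a :: l) x -> norm1 x < k%:R -> step x a a = 0 ->
  partialF f a x < c * tau / k%:R.
Proof.
move=> [_ x_zero _] x_norm; rewrite /alg_step ltNge; case: ifP => // _.
rewrite /chi in_set1 eqxx mulr1 x_zero ?mem_head // add0r => /eqP.
by rewrite gt_eqF // lt_min p_gt0 subr_gt0.
Qed.

Lemma alg_x_marginal_lt (s : seq T) (u : T) : uniq s -> u \in s ->
  norm1 (alg_x f p c tau k s) < k%:R -> alg_x f p c tau k s u = 0 ->
  dmultilinear f u (alg_x f p c tau k s) < c * tau / k%:R.
Proof.
move=> us su; case/splitPr: su us => s1 s2 us; rewrite /alg_x foldl_cat /=.
set x1 := foldl step _ s1; set xh := foldl step _ s2 => xh_norm xh_u.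
have [inv1 _ _] := alg_fold_spec us (alg_invariant0 _).
have /andP [u_s2 us2] : uniq (u :: s2) by move: us; rewrite cat_uniq => /and3P [].
have [inv2 le12 n12] := alg_step_spec u_s2 inv1.
have us2' : uniq (s2 ++ [::]) by rewrite cats0.
have inv2' : alg_invariant (s2 ++ [::]) (step x1 u) by rewrite cats0.
have [[xh_range _ _] le2h n2h] := alg_fold_spec us2' inv2'.
have x2_u : step x1 u u = 0.
  have [/(_ u) /andP [x2_u_ge0 _] _ _] := inv2.
  by apply/eqP; rewrite eq_le x2_u_ge0 -xh_u le2h.
have x1_norm : norm1 x1 < k%:R by rewrite (le_lt_trans n12) ?(le_lt_trans n2h).
have := alg_step_rejected inv1 x1_norm x2_u.
have [x1_range _ _] := inv1.
rewrite partialF_dmultilinear => [|v]; last first.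
  by have /andP [x0 x1p] := x1_range v; rewrite x0 (le_trans x1p).
apply: le_lt_trans; apply: dmultilinear_antitone => // v.
- by have /andP [] := x1_range v.
- exact: le_trans (le12 v) (le2h v).
- by have /andP [_ xp] := xh_range v; apply: le_trans xp p_le1.
Qed.

End Algorithm.

Theorem lemma3p5 (R : realFieldType) (T : finType) (f : {set T} -> R)
  (k : nat) (p c alpha tau : R) (s : seq T) (OPT : {set T}) :
  (forall A : {set T}, 0 <= f A) ->
  submodular f ->
  (0 < k)%N ->
  0 < p -> p < 1 ->
  0 < c ->
  0 < alpha -> alpha <= 1 ->
  0 <= tau ->
  uniq s -> (forall u : T, u \in s) ->
  (#|OPT| <= k)%N ->
  (forall S : {set T}, (#|S| <= k)%N -> f S <= f OPT) ->
  let xh := alg_x f p c tau k s in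
  norm1 xh < k%:R ->
  multilinear f (fun v => xh v + chi R (OPT :\: supp xh) v)
    <= multilinear f xh + c * tau.
Proof.
move=> _ f_submod k_gt0 p_gt0 /ltW p_le1 c_gt0 _ _ tau_ge0 us s_all OPT_k _.
move=> xh xh_norm.
set S := OPT :\: supp xh.
have xh_range v : 0 <= xh v <= p by apply: alg_x_range.
have xh01 : in_unit_cube xh.
  by move=> v; have /andP [x0 xp] := xh_range v; rewrite x0 (le_trans xp).
have xh_S : {in S, forall v, xh v = 0}.
  move=> v; rewrite !inE -leNgt => /andP [xh_le0 _].
  by apply/eqP; rewrite eq_le xh_le0; have /andP [] := xh_range v.
apply: le_trans (multilinear_add_chi_le f_submod xh01 xh_S) _; rewrite lerD2l.
have gain u : u \in S -> dmultilinear f u xh <= c * tau / k%:R.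
  by move=> uS; apply/ltW/alg_x_marginal_lt; rewrite ?s_all //; apply: xh_S.
apply: le_trans (ler_sum _ gain) _; rewrite sumr_const.
have S_k : (#|S| <= k)%N.
  exact: leq_trans (subset_leq_card (subsetDl _ _)) OPT_k.
have k_neq0 : k%:R != 0 :> R by rewrite pnatr_eq0 -lt0n.
have ctk_ge0 : 0 <= c * tau / k%:R by rewrite divr_ge0 ?ler0n // mulr_ge0 // ltW.
apply: le_trans (ler_wpMn2l ctk_ge0 S_k) _.
by rewrite -[c * tau / k%:R *+ k]mulr_natr divfK.
Qed.
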